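(* Let $A$ be a $\Gamma$-ring and $I\subseteq A$ an ideal such that $A/I$ inherits a $\Gamma$-ring structure making $A\to A/I$ a homomorphism of $\Gamma$-rings (i.e. $\Gamma\cdot I\subseteq I$). Let $T=3\,Q_0+2a\,Q_2\in\Gamma$ and let $N\colon A\to A$ be \begin{align*} Nx &= (Q_0x)^3 +2a\, (Q_0x)^2Q_2x -a\, Q_0x(Q_1x)^2 + a^2\,Q_0x(Q_2x)^2 - 6\, Q_0x\, Q_1x \, Q_2 x \\ &\qquad +2\,(Q_1x)^3 -2a\, Q_1x(Q_2x)^2 +4\,(Q_2x)^3. \end{align*} Then for every $x\in I$, \[ N(1+x)\equiv 1+Tx \mod I^2 . \]
   Context: $R=\mathbb{Z}[a]$ is a polynomial ring. $\Gamma$ is the associative ring equipped with a ring homomorphism $\eta\colon R\to\Gamma$, generated over $R$ by $Q_0,Q_1,Q_2$ subject to: (i) the $Q_i$ commute with elements of $\mathbb{Z}\subset R$, and $Q_0\,a = a^2Q_0-2aQ_1+6Q_2$, $Q_1\,a=3Q_0+aQ_2$, $Q_2\,a=-aQ_0+3Q_1$; (ii) $Q_1Q_0=2Q_2Q_1-2Q_0Q_2$ and $Q_2Q_0=Q_0Q_1+aQ_0Q_2-2Q_1Q_2$. A $\Gamma$-ring is a commutative $R$-algebra $A$ with a left $\Gamma$-module structure extending its $R$-module structure, such that $Q_0\cdot 1=1$, $Q_1\cdot1=Q_2\cdot 1=0$, and the cartan formulas hold for all $x,y\in A$: $Q_0(xy) = Q_0x\,Q_0y + 2\,Q_1x\,Q_2y+2\,Q_2x\,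 Q_1y$, $Q_1(xy) = Q_0x\, Q_1y + Q_1x\, Q_0y + a\,Q_1x\, Q_2y +a\, Q_2x\, Q_1y +2\, Q_2x\, Q_2y$, $Q_2(xy) = Q_0x\, Q_2y+Q_2x\, Q_0y+Q_1x\, Q_1y + a\, Q_2x\, Q_2y$. *)

From mathcomp Require Import all_boot all_algebra.
Set Implicit Arguments. Unset Strict Implicit. Unset Printing Implicit Defensive.
Import GRing.Theory.
Local Open Scope ring_scope.

(* Since R = Z[a], an R-algebra structure on A is the choice of the image
   [ga] of a in A.  A left Gamma-module structure extending the R-module
   structure is the data of additive (hence Z-linear) operators Q0 Q1 Q2
   on A satisfying the defining relations (i) and (ii) of Gamma, where
   a acts by multiplication by [ga]. *)
Record GammaRing (A : comPzRingType) := {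
  ga : A;
  Q0 : A -> A;
  Q1 : A -> A;
  Q2 : A -> A;
  Q0D : forall x y, Q0 (x + y) = Q0 x + Q0 y;
  Q1D : forall x y, Q1 (x + y) = Q1 x + Q1 y;
  Q2D : forall x y, Q2 (x + y) = Q2 x + Q2 y;
  Q0a : forall x, Q0 (ga * x) = ga ^+ 2 * Q0 x - 2%:R * ga * Q1 x + 6%:R * Q2 x;
  Q1a : forall x, Q1 (ga * x) = 3%:R * Q0 x + ga * Q2 x;
  Q2a : forall x, Q2 (ga * x) = - (ga * Q0 x) + 3%:R * Q1 x;
  Q1Q0 : forall x, Q1 (Q0 x) = 2%:R * Q2 (Q1 x) - 2%:R * Q0 (Q2 x);
  Q2Q0 : forall x, Q2 (Q0 x) = Q0 (Q1 x) + ga * Q0 (Q2 x) - 2%:R * Q1 (Q2 x);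
  Q0_1 : Q0 1 = 1;
  Q1_1 : Q1 1 = 0;
  Q2_1 : Q2 1 = 0;
  Q0M : forall x y, Q0 (x * y) =
      Q0 x * Q0 y + 2%:R * (Q1 x * Q2 y) + 2%:R * (Q2 x * Q1 y);
  Q1M : forall x y, Q1 (x * y) =
      Q0 x * Q1 y + Q1 x * Q0 y + ga * (Q1 x * Q2 y) + ga * (Q2 x * Q1 y)
      + 2%:R * (Q2 x * Q2 y);
  Q2M : forall x y, Q2 (x * y) =
      Q0 x * Q2 y + Q2 x * Q0 y + Q1 x * Q1 y + ga * (Q2 x * Q2 y)
}.

Definition is_ideal (A : comPzRingType) (I : A -> Prop) : Prop :=
  [/\ I 0, (forall x y, I x -> I y -> I (x + y)) &
      (forall r x, I x -> I (r * x))].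

(* Gamma . I is contained in I (equivalently, A/I inherits a Gamma-ring
   structure making A -> A/I a Gamma-ring homomorphism). *)
Definition Gamma_stable (A : comPzRingType) (G : GammaRing A) (I : A -> Prop) :=
  forall x, I x -> [/\ I (Q0 G x), I (Q1 G x) & I (Q2 G x)].

Definition ideal_sq (A : comPzRingType) (I : A -> Prop) (v : A) : Prop :=
  exists n (y z : 'I_n -> A),
    (forall i, I (y i) /\ I (z i)) /\ v = \sum_(i < n) y i * z i.

Definition Top (A : comPzRingType) (G : GammaRing A) (x : A) : A :=
  3%:R * Q0 G x + 2%:R * ga G * Q2 G x.

Definition Nop (A : comPzRingType) (G : GammaRing A) (x : A) : A :=
  let a := ga G in
  let u := Q0 G x in let v := Q1 G x in let w := Q2 G x in
  u ^+ 3 + 2%:R * a * u ^+ 2 * w - a * u * v ^+ 2 + a ^+ 2 * u * w ^+ 2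
  - 6%:R * u * v * w + 2%:R * v ^+ 3 - 2%:R * a * v * w ^+ 2
  + 4%:R * w ^+ 3.

(* Since Q0 1 = 1 and Q1 1 = Q2 1 = 0, the operators evaluated at 1 + x are
   1 + Q0 x, Q1 x and Q2 x.  Substituting into the cubic form defining N, the
   constant term is 1 and the linear part is 3 Q0 x + 2a Q2 x = T x; every
   remaining monomial has degree at least two in Q0 x, Q1 x, Q2 x, which all
   lie in I because I is Gamma-stable. *)
From mathcomp Require Import all_boot all_algebra.
From mathcomp Require Import ring.
Set Implicit Arguments. Unset Strict Implicit. Unset Printing Implicit Defensive.
Import GRing.Theory.
Local Open Scope ring_scope.

Section IdealSquare.

Variables (A : comPzRingType) (I : A -> Prop).

Lemma ideal_sq_mul y z : I y -> I z -> ideal_sq I (y * z).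
Proof.
move=> Iy Iz; exists 1%N, (fun=> y), (fun=> z); split=> //.
by rewrite big_ord1.
Qed.

Lemma ideal_sq_add s t : ideal_sq I s -> ideal_sq I t -> ideal_sq I (s + t).
Proof.
move=> [m [y [z [Iyz ->]]]] [n [y' [z' [Iyz' ->]]]].
pose pick (B : Type) (f : 'I_m -> B) (g : 'I_n -> B) (i : 'I_(m + n)) :=
  match split i with inl j => f j | inr k => g k end.
exists (m + n)%N, (pick _ y y'), (pick _ z z'); split.
  by move=> i; rewrite /pick; case: (split i).
rewrite big_split_ord /pick; congr (_ + _); apply: eq_bigr => i _.
  by rewrite (unsplitK (inl i : _ + 'I_n)).
by rewrite (unsplitK (inr i : 'I_m + _)).
Qed.

End IdealSquare.

Definition Nform (A : comPzRingType) (a u v w : A) : A :=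
  u ^+ 3 + 2%:R * a * u ^+ 2 * w - a * u * v ^+ 2 + a ^+ 2 * u * w ^+ 2
  - 6%:R * u * v * w + 2%:R * v ^+ 3 - 2%:R * a * v * w ^+ 2
  + 4%:R * w ^+ 3.

Lemma NopE (A : comPzRingType) (G : GammaRing A) x :
  Nop G x = Nform (ga G) (Q0 G x) (Q1 G x) (Q2 G x).
Proof. by []. Qed.

Lemma Nform_1D (A : comPzRingType) (a u v w : A) :
  Nform a (1 + u) v w - (1 + (3%:R * u + 2%:R * a * w)) =
    u * ((3%:R + u) * u + (4%:R * a + 2%:R * a * u) * w)
  + v * ((2%:R * v - a - a * u) * v + (- (6%:R * (1 + u))) * w)
  + w * ((a ^+ 2 * (1 + u) - 2%:R * a * v + 4%:R * w) * w).
Proof. by rewrite /Nform; ring. Qed.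

Section GammaAtOnePlus.

Variables (A : comPzRingType) (G : GammaRing A).

Lemma Q0_1D x : Q0 G (1 + x) = 1 + Q0 G x.
Proof. by rewrite Q0D Q0_1. Qed.

Lemma Q1_1D x : Q1 G (1 + x) = Q1 G x.
Proof. by rewrite Q1D Q1_1 add0r. Qed.

Lemma Q2_1D x : Q2 G (1 + x) = Q2 G x.
Proof. by rewrite Q2D Q2_1 add0r. Qed.

End GammaAtOnePlus.

Theorem mainTheorem5 (A : comPzRingType) (G : GammaRing A) (I : A -> Prop) :
  is_ideal I -> Gamma_stable G I ->
  forall x : A, I x -> ideal_sq I (Nop G (1 + x) - (1 + Top G x)).
Proof.
move=> [_ ID IM] stableI x Ix; have [Iu Iv Iw] := stableI x Ix.
have Icomb r s y z : I y -> I z -> I (r * y + s * z).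
  by move=> Iy Iz; apply: ID; apply: IM.
rewrite NopE Q0_1D Q1_1D Q2_1D /Top Nform_1D.
apply: ideal_sq_add; first apply: ideal_sq_add.
- exact: ideal_sq_mul (Icomb _ _ _ _ Iu Iw).
- exact: ideal_sq_mul (Icomb _ _ _ _ Iv Iw).
- exact: ideal_sq_mul (IM _ _ Iw).
Qed.
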